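(* Let $f:\mathcal{X}\to\mathbb{R}$ be convex and $\beta$-smooth with diagonally dominant Hessian everywhere, where $\mathcal{X}\subseteq\mathbb{R}^d$ is convex. Then for any $x,y\in\mathcal{X}$ and step size $\eta\le 2/\beta$, $$\|(x-\eta\nabla f(x))-(y-\eta\nabla f(y))\|_\infty\le\|x-y\|_\infty.$$
   Context: $\beta$-smooth means $\|\nabla^2f(x)\|_\infty\le\beta$ for all $x\in\mathcal{X}$, where for a symmetric matrix $\|A\|_\infty=\max_i\sum_j|A_{ij}|$. A matrix $A$ is diagonally dominant if $|A_{ii}|\ge\sum_{j\ne i}|A_{ij}|$ for all $i$. *)

From HB Require Import structures.
From mathcomp Require Import all_boot all_order all_algebra.
From mathcomp Require Import all_classical all_reals all_analysis.
Set Implicit Arguments. Unset Strict Implicit. Unset Printing Implicit Defensive.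
Import Order.TTheory GRing.Theory Num.Theory.
Import numFieldNormedType.Exports.
Local Open Scope classical_set_scope.
Local Open Scope ring_scope.

Section Defs.
Variables (R : realType) (d : nat).

Definition basisv (i : 'I_d) : 'rV[R]_d := \row_j (i == j)%:R.

Definition grad (f : 'rV[R]_d -> R) (x : 'rV[R]_d) : 'rV[R]_d :=
  \row_i derive f x (basisv i).

Definition hess (f : 'rV[R]_d -> R) (x : 'rV[R]_d) : 'M[R]_d :=
  \matrix_(i, j) (derive (grad f) x (basisv j)) 0 i.

Definition vnorm_inf (v : 'rV[R]_d) : R := \big[Num.max/0]_i `|v 0 i|.

Definition mnorm_inf (A : 'M[R]_d) : R :=
  \big[Num.max/0]_i \sum_j `|A i j|.

Definition diag_dominant (A : 'M[R]_d) : Prop :=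
  forall i : 'I_d, \sum_(j | j != i) `|A i j| <= `|A i i|.

Definition convex_set_in (X : set 'rV[R]_d) : Prop :=
  forall x y, X x -> X y -> forall t : R, 0 <= t <= 1 ->
    X (t *: x + (1 - t) *: y).

Definition convex_on (X : set 'rV[R]_d) (f : 'rV[R]_d -> R) : Prop :=
  forall x y, X x -> X y -> forall t : R, 0 <= t <= 1 ->
    f (t *: x + (1 - t) *: y) <= t * f x + (1 - t) * f y.

End Defs.

(* By the mean value theorem along the segment from y to x, the i-th coordinate
   of the difference of the two gradient steps is v_i - eta (H v)_i, where
   v = x - y and H is the Hessian at some point of the segment.  Convexity makes
   the diagonal of H nonnegative; with diagonal dominance and
   eta * (row sum of |H|) <= eta * beta <= 2 this yields
   |1 - eta H_ii| + eta sum_{j <> i} |H_ij| <= 1, hence |v_i - eta (H v)_i| <= |v|_inf. *)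

From HB Require Import structures.
From mathcomp Require Import all_boot all_order all_algebra.
From mathcomp Require Import all_classical all_reals all_analysis.
From mathcomp Require Import ring lra.
Import Order.TTheory GRing.Theory Num.Theory.
Import numFieldNormedType.Exports.
Local Open Scope classical_set_scope.
Local Open Scope ring_scope.

Section row_step.
Context {R : realDomainType} {n : nat}.

Lemma diag_dominant_row_step_le (H : 'M[R]_n) (v : 'rV[R]_n) (eta N : R)
    (i : 'I_n) :
  0 <= eta -> 0 <= H i i -> \sum_(j | j != i) `|H i j| <= H i i ->
  eta * \sum_j `|H i j| <= 2 -> (forall j, `|v 0 j| <= N) ->
  `|v 0 i - eta * \sum_j v 0 j * H i j| <= N.
Proof.
move=> eta0 Hii0; set s := \sum_(j | j != i) _ => dom.
rewrite (bigD1 i) //= ger0_norm // -/s => row_le vN.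
have N0 : 0 <= N := le_trans (normr_ge0 _) (vN i).
set S := \sum_(j | j != i) v 0 j * H i j.
have S_le : `|S| <= s * N.
  rewrite /S /s mulr_suml; apply: le_trans (ler_norm_sum _ _ _) _.
  by apply: ler_sum => j _; rewrite normrM mulrC ler_wpM2l.
have coef_le : `|1 - eta * H i i| + eta * s <= 1.
  have : eta * s <= eta * H i i by rewrite ler_wpM2l.
  by rewrite mulrDr in row_le; case: (lerP 0 (1 - eta * H i i)) => h;
    [rewrite ger0_norm | rewrite ltr0_norm]; lra.
rewrite (bigD1 i) //= -/S.
have -> : v 0 i - eta * (v 0 i * H i i + S) = (1 - eta * H i i) * v 0 i - eta * S.
  by ring.
apply: le_trans (ler_normB _ _) _; rewrite !normrM (ger0_norm eta0).
apply: le_trans (_ : `|1 - eta * H i i| * N + eta * (s * N) <= _).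
  by apply: lerD; rewrite ler_wpM2l.
by rewrite mulrA -mulrDl -[leRHS]mul1r ler_wpM2r.
Qed.

End row_step.

Section real_line.
Context {R : realType}.

Lemma MVT_cc (phi psi : R -> R) (a b : R) : a < b ->
  (forall s, a <= s <= b -> is_derive s (1 : R) phi (psi s)) ->
  exists2 c, a < c < b & phi b - phi a = psi c * (b - a).
Proof.
move=> ab dphi.
have [c c_ab E] : exists2 c, c \in `]a, b[ & phi b - phi a = psi c * (b - a).
  apply: MVT => // [s|].
    by rewrite in_itv /= => /andP[a_s s_b]; apply: dphi; rewrite !ltW.
  apply: derivable_within_continuous => s; rewrite in_itv /= => s_ab.
  by have [] := dphi s s_ab.
by exists c => //; rewrite in_itv /= in c_ab.
Qed.

Lemma deriv_ge0_of_midpoint_convex (phi psi : R -> R) (a : R) :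
  (\forall s \near 0, is_derive s (1 : R) phi (psi s)) ->
  (\forall s \near 0, 2 * phi 0 <= phi s + phi (- s)) ->
  is_derive 0 (1 : R) psi a -> 0 <= a.
Proof.
move=> dphi_near mid_near [psi_quot <-]; rewrite leNgt; apply/negP => a_lt0.
(* Otherwise the mean value theorem on [0, t] and [-t, 0] gives
   phi t - phi 0 < psi 0 * t < phi 0 - phi (- t), against midpoint convexity. *)
have quot_lt0 : \forall s \near 0^', s^-1 * (psi s - psi 0) < 0.
  apply: filterS (cvgr_lt _ psi_quot _ a_lt0) => s.
  by rewrite /= addr0 [_%:A]mulr1.
have [r r_gt0 r_ball] :=
  iffLR (nbhs_ballP _ _) (filterI (filterI dphi_near mid_near) quot_lt0).
pose t := r / 2.
have t_gt0 : 0 < t by rewrite divr_gt0.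
have t_lt_r : t < r by rewrite /t ltr_pdivrMr // ltr_pMr // ltr1n.
have ball_t s : -t <= s <= t -> ball (0 : R) r s.
  by rewrite /ball /= sub0r normrN ltr_norml => /andP[? ?]; apply/andP; split; lra.
have dphi_t s : -t <= s <= t -> is_derive s (1 : R) phi (psi s).
  by move=> /ball_t /r_ball [[]].
have quot_t s : -t <= s <= t -> s != 0 -> s^-1 * (psi s - psi 0) < 0.
  by move=> /ball_t /r_ball [].
have [c1 /andP[c1_gt0 c1_lt] E1] :
    exists2 c, 0 < c < t & phi t - phi 0 = psi c * (t - 0).
  by apply: MVT_cc => // s /andP[? ?]; apply: dphi_t; apply/andP; split; lra.
have [c2 /andP[c2_gt c2_lt0] E2] :
    exists2 c, -t < c < 0 & phi 0 - phi (- t) = psi c * (0 - - t).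
  apply: MVT_cc; first by rewrite oppr_lt0.
  by move=> s /andP[? ?]; apply: dphi_t; apply/andP; split; lra.
have psi_c1 : psi c1 < psi 0.
  have c1_in : -t <= c1 <= t by apply/andP; split; lra.
  have := quot_t c1 c1_in (lt0r_neq0 c1_gt0).
  by rewrite pmulr_rlt0 ?invr_gt0 // subr_lt0.
have psi_c2 : psi 0 < psi c2.
  have c2_in : -t <= c2 <= t by apply/andP; split; lra.
  have := quot_t c2 c2_in (ltr0_neq0 c2_lt0).
  by rewrite nmulr_rlt0 ?invr_lt0 // subr_gt0.
have mid_t : 2 * phi 0 <= phi t + phi (- t).
  have t_in : -t <= t <= t by apply/andP; split; lra.
  by have [[_ ]] := r_ball t (ball_t t t_in).
have : psi c1 * t < psi c2 * t by rewrite ltr_pM2r // (lt_trans psi_c1).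
rewrite subr0 in E1; rewrite sub0r opprK in E2; lra.
Qed.

End real_line.

Section along_lines.
Context {R : realType} {V : normedModType R}.

Lemma is_derive_along_line (W : normedModType R) (G : V -> W) (z v : V) t :
  derivable G (t *: v + z) v ->
  is_derive t (1 : R) (fun s => G (s *: v + z)) ('D_v G (t *: v + z)).
Proof.
have quotE : (fun s : R => s^-1 *: (((fun s => G (s *: v + z)) \o shift t) (s *: 1)
                                   - G (t *: v + z)))
    = (fun s : R => s^-1 *: ((G \o shift (t *: v + z)) (s *: v) - G (t *: v + z))).
  apply/funext => s /=; congr (_ *: (G _ - _)).
  by rewrite [_%:A]mulr1 scalerDl addrA.
by move=> dG; split; [rewrite /derivable quotE | rewrite /derive quotE].
Qed.

Lemma is_derive_mx_coord {m n : nat} {M : V -> 'M[R]_(m, n)} {z v : V}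
    {dM : 'M[R]_(m, n)} (i : 'I_m) (j : 'I_n) :
  is_derive z v M dM -> is_derive z v (fun w => M w i j) (dM i j).
Proof.
move=> [dMzv <-]; rewrite derive_mx // mxE; apply: derivableP.
exact: (iffLR (derivable_mxP _ _ _) dMzv).
Qed.

Lemma MVT_along_segment (G DG : V -> R) (x y : V) :
  (forall t, 0 <= t <= 1 ->
     is_derive (t *: (x - y) + y) (x - y) G (DG (t *: (x - y) + y))) ->
  exists2 t, 0 < t < 1 & G x - G y = DG (t *: (x - y) + y).
Proof.
move=> dG.
have [t t01 E] : exists2 t, 0 < t < 1 &
    G (1 *: (x - y) + y) - G (0 *: (x - y) + y) = DG (t *: (x - y) + y) * (1 - 0).
  apply: (@MVT_cc R (fun s => G (s *: (x - y) + y)) (fun s => DG (s *: (x - y) + y)))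
    => // s /dG [dGs <-]; exact: is_derive_along_line.
by exists t => //; move: E; rewrite scale1r scale0r add0r subrK subr0 mulr1.
Qed.

End along_lines.

Section gradient_step.
Context {R : realType} {d : nat}.
Implicit Types (X : set 'rV[R]_d) (f : 'rV[R]_d -> R).

Lemma convex_set_in_segment {X x y t} : convex_set_in X -> X x -> X y ->
  0 <= t <= 1 -> X (t *: (x - y) + y).
Proof.
move=> cX Xx Xy t01; have := cX x y Xx Xy t t01.
by rewrite scalerBr scalerBl scale1r addrCA addrC.
Qed.

Lemma convex_on_midpoint X f x u : convex_on X f -> X (u + x) -> X (- u + x) ->
  2 * f x <= f (u + x) + f (- u + x).
Proof.
move=> cf Xp Xm.
have half01 : 0 <= (2^-1 : R) <= 1 by apply/andP; split; lra.
have half : 1 - 2^-1 = 2^-1 :> R by rewrite {1}(splitr 1) div1r addrK.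
have := cf _ _ Xp Xm _ half01; rewrite half -scalerDr addrACA subrr add0r.
rewrite -mulr2n -scalerMnr scalerMnl -mulr_natr mulVf ?scale1r ?pnatr_eq0 //.
lra.
Qed.

Lemma convex_on_second_derive_ge0 X f x v : open X -> convex_on X f ->
  (forall z, X z -> differentiable f z) -> derivable (fun w => 'D_v f w) x v ->
  X x -> 0 <= 'D_v (fun w => 'D_v f w) x.
Proof.
move=> oX cf df dDf Xx.
have X_near w : \forall s \near 0, X (s *: w + x).
  have line_cont : {for 0, continuous (fun s : R => s *: w + x)}.
    by apply: continuousD; [exact: scalel_continuous | exact: cst_continuous].
  by apply: line_cont; rewrite /= scale0r add0r; exact: open_nbhs_nbhs.
apply: (@deriv_ge0_of_midpoint_convex _ (fun s => f (s *: v + x))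
  (fun s => 'D_v f (s *: v + x))).
- apply: filterS (X_near v) => s Xs; apply: is_derive_along_line.
  exact/diff_derivable/df.
- apply: filterS2 (X_near v) (X_near (- v)) => s Xs Xns.
  rewrite scale0r add0r scaleNr; apply: convex_on_midpoint cf Xs _.
  by rewrite -scalerN.
- by have := @is_derive_along_line _ _ _ (fun w => 'D_v f w) x v 0;
    rewrite scale0r add0r; apply.
Qed.

Lemma basisv_delta (i : 'I_d) : basisv R i = delta_mx 0 i.
Proof. by apply/rowP => j; rewrite !mxE eqxx eq_sym. Qed.

Lemma derive_grad_row f z v i : differentiable (grad f) z ->
  'D_v (grad f) z 0 i = \sum_j v 0 j * hess f z i j.
Proof.
move=> dg; rewrite deriveE // {1}(row_sum_delta v) linear_sum summxE.
by apply: eq_bigr => j _; rewrite linearZ mxE /hess mxE deriveE // basisv_delta.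
Qed.

Lemma is_derive_partial f x i j : derivable (grad f) x (basisv R j) ->
  is_derive x (basisv R j) (fun w => 'D_(basisv R i) f w) (hess f x i j).
Proof.
move=> dg; rewrite /hess mxE.
have -> : (fun w => 'D_(basisv R i) f w) = (fun w => grad f w 0 i).
  by apply/funext => w; rewrite mxE.
exact: is_derive_mx_coord 0 i (derivableP dg).
Qed.

Lemma hess_diag_ge0 {X f x} i : open X -> convex_on X f ->
  (forall z, X z -> differentiable f z) -> differentiable (grad f) x -> X x ->
  0 <= hess f x i i.
Proof.
move=> oX cf df dg Xx.
have [dD <-] := is_derive_partial f x i i (diff_derivable (v := basisv R i) dg).
exact: convex_on_second_derive_ge0 oX cf df dD Xx.
Qed.

Lemma is_derive_grad_step_coord {f} eta {w} v i : differentiable (grad f) w ->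
  is_derive w v (fun w => (w - eta *: grad f w) 0 i)
    (v 0 i - eta * \sum_j v 0 j * hess f w i j).
Proof.
move=> dg; have dgrad := derivableP (diff_derivable (v := v) dg).
have dstep : is_derive w v (fun w => w - eta *: grad f w)
                         (v - eta *: 'D_v (grad f) w) by exact: is_deriveB.
by have := is_derive_mx_coord 0 i dstep; rewrite !mxE -derive_grad_row.
Qed.

Lemma grad_step_coord_MVT {X f} eta {x y} i : convex_set_in X ->
  (forall z, X z -> differentiable (grad f) z) -> X x -> X y ->
  exists2 c, X c & ((x - eta *: grad f x) - (y - eta *: grad f y)) 0 i
                   = (x - y) 0 i - eta * \sum_j (x - y) 0 j * hess f c i j.
Proof.
move=> cX dg Xx Xy.
have [t /andP[t_gt0 t_lt1] E] := @MVT_along_segment _ _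
  (fun w => (w - eta *: grad f w) 0 i)
  (fun w => (x - y) 0 i - eta * \sum_j (x - y) 0 j * hess f w i j) x y
  (fun t t01 => is_derive_grad_step_coord eta (x - y) i
                  (dg _ (convex_set_in_segment cX Xx Xy t01))).
exists (t *: (x - y) + y); last by rewrite -E !mxE.
by apply: convex_set_in_segment => //; rewrite !ltW.
Qed.

Lemma ler_coord_vnorm_inf (v : 'rV[R]_d) j : `|v 0 j| <= vnorm_inf v.
Proof. exact: le_bigmax. Qed.

Lemma vnorm_inf_ge0 (v : 'rV[R]_d) : 0 <= vnorm_inf v.
Proof.
by rewrite /vnorm_inf; elim/big_rec: _ => // j a _ a_ge0; rewrite le_max a_ge0 orbT.
Qed.

Lemma vnorm_inf_le (v : 'rV[R]_d) N : 0 <= N -> (forall j, `|v 0 j| <= N) ->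
  vnorm_inf v <= N.
Proof. by move=> N_ge0 vN; apply: bigmax_le. Qed.

Lemma ler_row_mnorm_inf (A : 'M[R]_d) i : \sum_j `|A i j| <= mnorm_inf A.
Proof. exact: le_bigmax. Qed.

End gradient_step.

Theorem lemma3p2 (R : realType) (d : nat) (X : set 'rV[R]_d)
  (f : 'rV[R]_d -> R) (beta eta : R) :
  open X -> convex_set_in X ->
  (forall x, X x -> differentiable f x) ->
  (forall x, X x -> differentiable (grad f) x) ->
  convex_on X f ->
  0 < beta ->
  (forall x, X x -> mnorm_inf (hess f x) <= beta) ->
  (forall x, X x -> diag_dominant (hess f x)) ->
  0 < eta -> eta <= 2 / beta ->
  forall x y, X x -> X y ->
    vnorm_inf ((x - eta *: grad f x) - (y - eta *: grad f y)) <= vnorm_inf (x - y).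
Proof.
move=> oX cX df dg cf beta_gt0 hess_le dd eta_gt0 eta_le x y Xx Xy.
apply: vnorm_inf_le => [|i]; first exact: vnorm_inf_ge0.
have [c Xc ->] := grad_step_coord_MVT eta i cX dg Xx Xy.
have Hii_ge0 := hess_diag_ge0 i oX cf df (dg c Xc) Xc.
apply: diag_dominant_row_step_le => //.
- exact: ltW.
- by rewrite -[leRHS]ger0_norm //; exact: dd.
- apply: le_trans (_ : eta * beta <= 2); last by rewrite -ler_pdivlMr.
  rewrite ler_pM2l //; apply: le_trans (hess_le c Xc).
  exact: ler_row_mnorm_inf.
- by move=> j; exact: ler_coord_vnorm_inf.
Qed.
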